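(* Let $\varepsilon>0$ and $q\in(0,1)$, and fix a real number $\sigma$. Then there exist constants $C>0$ and $V_0>0$, depending only on $\varepsilon$, $q$ and $\sigma$, such that for every real $v$ with $|v|\ge V_0$ for which $s=\sigma+iv$ satisfies $\inf_{r\in\mathbb{Z}_{\ge -1}}|1-q^{r+s}|>\varepsilon$, we have $$|\zeta_q(s)|\le \begin{cases} C & (\sigma>1),\\ C\,|v| & (\sigma=1),\\ C\exp\left(-(\sigma-1)(1+\pi/2)\,|v|\right) & (\sigma<1).\end{cases}$$
   Context: For $q\in(0,1)$ and a positive integer $m$, the $q$-integer is $[m]_q=\frac{1-q^m}{1-q}$, and $q^{w}=e^{w\log q}$ for complex $w$. The two-variable $q$-zeta function is $\zeta_q(s,t)=\sum_{m=1}^\infty \frac{q^{mt}}{[m]_q^s}$, absolutely convergent for $s\in\mathbb{C}$, $\Re(t)>0$, and meromorphically continued to $\mathbb{C}^2$ (simple poles at $t\in\{a+2\pi i b/\log q: a,b\in\mathbb{Z}, a\le0\}$). The $q$-analogue of the Riemann zeta function is $\zeta_q(s)=\zeta_q(s,s-1)$ (via this continuation). *)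

From Stdlib Require Import Reals ZArith.
From Coquelicot Require Import Coquelicot.
Open Scope R_scope.

(* q^w := e^{w log q} for real q > 0 and complex w, written out in real terms:
   e^{(a+ib) log q} = q^a (cos(b log q) + i sin(b log q)). *)
Definition qpow (q : R) (w : C) : C :=
  (Rpower q (Re w) * cos (Im w * ln q), Rpower q (Re w) * sin (Im w * ln q)).

(* generalized binomial coefficient binom(s+k-1, k) = s(s+1)...(s+k-1)/k! *)
Fixpoint binomC (s : C) (k : nat) : C :=
  match k with
  | O => 1%C
  | S k' => (binomC s k' * (s + RtoC (INR k')) / RtoC (INR k' + 1))%C
  end.

Definition CSeries (a : nat -> C) : C :=
  (Series (fun k => Re (a k)), Series (fun k => Im (a k))).

(* Meromorphic continuation of zeta_q(s,t) = sum_{m>=1} q^{mt} / [m]_q^s,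
   given by the (everywhere valid, off the poles) expansion
   zeta_q(s,t) = (1-q)^s sum_{k>=0} binom(s+k-1,k) q^{t+k} / (1 - q^{t+k}),
   obtained by expanding [m]_q^{-s} = (1-q)^s (1-q^m)^{-s} binomially. *)
Definition zeta_q2 (q : R) (s t : C) : C :=
  (qpow (1 - q) s *
   CSeries (fun k => binomC s k * qpow q (t + RtoC (INR k))
                     / (1 - qpow q (t + RtoC (INR k)))))%C.

Definition zeta_q (q : R) (s : C) : C := zeta_q2 q s (s - 1)%C.

(* Write zeta_q(s) = (1-q)^s sum_k C(s+k-1,k) y_k / (1 - y_k) with y_k = q^(s-1+k), and choose
   n0 with Re s - 1 + n0 > 0, so that |y_k| <= theta := q^(Re s - 1 + n0) < 1 for k >= n0.  The
   first n0 terms are controlled by |1 - y_k| >= eps and |C(s+k-1,k)| <= (|s| + n0)^n0.  In the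
   tail, expanding y_k / (1 - y_k) = sum_m y_k^m and exchanging the sums leaves
   sum_m q^((s-1)m) P(q^m), where P is a segment of the binomial series of (1-x)^(-s).  Termwise
   this is exponentially large in |s|, but (1-x)^s times a truncation of the series has a
   derivative that telescopes to a single boundary term, and |(1-x)^s| = (1-x)^(Re s) does not
   depend on Im s.  The mean value theorem therefore bounds P by a polynomial of degree n0 in |s|,
   so |zeta_q(sigma + iv)| = O(|v|^n0); the cases n0 = 0, 1 and ceil(1 - sigma) give the three
   bounds, the polynomial being dominated by the exponential when sigma < 1. *)

From Stdlib Require Import Reals ZArith Lra Lia.
From Coquelicot Require Import Coquelicot.
Open Scope R_scope.

Lemma exp_le_compat x y : x <= y -> exp x <= exp y.
Proof. intros [H | ->]; [apply Rlt_le, exp_increasing, H | apply Rle_refl]. Qed.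

Lemma Rpower_gt0 x y : 0 < Rpower x y.
Proof. apply exp_pos. Qed.

Lemma Rpower_lt_1 q w : 0 < q < 1 -> 0 < w -> Rpower q w < 1.
Proof.
  intros Hq Hw. unfold Rpower. rewrite <- exp_0. apply exp_increasing.
  assert (ln q < 0) by (rewrite <- ln_1; apply ln_increasing; lra). nra.
Qed.

Lemma Rpower_1_sub_le c q t :
  0 <= c <= q -> q < 1 -> Rpower (1 - c) t <= Rpower (1 - q) (- Rabs t).
Proof.
  intros Hc Hq. unfold Rpower. apply exp_le_compat.
  assert (ln (1 - q) <= ln (1 - c)) by (apply ln_le; lra).
  assert (ln (1 - c) <= 0) by (rewrite <- ln_1; apply ln_le; lra).
  destruct (Rle_dec 0 t); [rewrite Rabs_right | rewrite Rabs_left]; nra.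
Qed.

Lemma pow_le_exp_mul c Y n :
  0 < c -> 0 <= Y -> Y ^ n <= ((INR n + 1) / c) ^ n * exp (c * Y).
Proof.
  intros Hc HY. pose proof (pos_INR n) as Hn.
  set (w := c * Y / (INR n + 1)).
  assert (Hw : 0 <= w) by (unfold w; apply Rdiv_le_0_compat; nra).
  replace Y with ((INR n + 1) / c * w) at 1 by (unfold w; field; lra).
  rewrite Rpow_mult_distr. apply Rmult_le_compat_l.
  { apply pow_le, Rdiv_le_0_compat; lra. }
  apply Rle_trans with (exp w ^ n).
  { apply pow_incr. pose proof (exp_ineq1_le w). lra. }
  rewrite <- Rpower_pow by apply exp_pos. unfold Rpower. rewrite ln_exp.
  apply exp_le_compat.
  replace (INR n * w) with (c * Y - w) by (unfold w; field; lra). lra.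
Qed.

Lemma INR_mul_pow_pred n x : INR n * (x * x ^ pred n) = INR n * x ^ n.
Proof. destruct n; simpl; ring. Qed.

Lemma le_of_le_plus_lim X Y (e : nat -> R) :
  is_lim_seq e 0 -> (forall n, X <= Y + e n) -> X <= Y.
Proof.
  intros He H.
  assert (HL : is_lim_seq (fun n => Y + e n) (Y + 0)).
  { apply is_lim_seq_plus'; [apply is_lim_seq_const | exact He]. }
  pose proof (is_lim_seq_le (fun _ => X) _ X _ H (is_lim_seq_const X) HL) as Hle.
  simpl in Hle. lra.
Qed.

Lemma is_lim_seq_Rabs_sub u (l : R) : is_lim_seq u l -> is_lim_seq (fun n => Rabs (l - u n)) 0.
Proof.
  intros H. assert (L := is_lim_seq_abs _ _ (is_lim_seq_minus' _ _ _ _ (is_lim_seq_const l) H)).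
  simpl in L. rewrite Rminus_diag, Rabs_R0 in L. exact L.
Qed.

Lemma re_minus (a b : C) : Re (a - b) = Re a - Re b.
Proof. unfold Cminus. rewrite re_plus, re_opp. ring. Qed.

Lemma im_le_Cmod c : Rabs (Im c) <= Cmod c.
Proof. eapply Rle_trans; [apply Rmax_r | apply Rmax_Cmod]. Qed.

Lemma Cmod_le_Rabs_add x y : Cmod (x, y) <= Rabs x + Rabs y.
Proof.
  replace (x, y) with (RtoC x + RtoC y * Ci)%C
    by (unfold RtoC, Ci, Cplus, Cmult; simpl; f_equal; ring).
  eapply Rle_trans; [apply Cmod_triangle |].
  rewrite Cmod_mult, Cmod_Ci, !Cmod_R. lra.
Qed.

Lemma Cmod_1_sub_ge w : 1 - Cmod w <= Cmod (1 - w).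
Proof.
  pose proof (Cmod_triangle (1 - w) w) as H.
  replace (1 - w + w)%C with (RtoC 1) in H by ring. rewrite Cmod_1 in H. lra.
Qed.

Lemma Re_mul_le_Cmod w c : Cmod w = 1 -> Re (w * c) <= Cmod c.
Proof.
  intros Hw. eapply Rle_trans; [apply Rle_abs | eapply Rle_trans; [apply re_le_Cmod |]].
  rewrite Cmod_mult, Hw. lra.
Qed.

Lemma Cmod_le_of_Re_le c B : (forall w, Cmod w = 1 -> Re (w * c) <= B) -> Cmod c <= B.
Proof.
  intros H. destruct (Ceq_dec c 0) as [-> | Hc].
  { rewrite Cmod_0. specialize (H 1%C Cmod_1). rewrite Cmult_0_r in H. exact H. }
  apply Cmod_gt_0 in Hc.
  (* rotate [c] onto the positive real axis *)
  replace (Cmod c) with (Re (Cconj c * RtoC (/ Cmod c) * c)%C).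
  - apply H. rewrite Cmod_mult, Cmod_conj, Cmod_R, Rabs_right.
    + field. lra.
    + apply Rle_ge, Rlt_le, Rinv_0_lt_compat, Hc.
  - replace (Cconj c * RtoC (/ Cmod c) * c)%C with (RtoC (/ Cmod c) * (c * Cconj c))%C by ring.
    rewrite <- Cmod2_conj, <- RtoC_mult, re_RtoC. field. lra.
Qed.

Lemma Cmod_mean_value (h h' : R -> C) x B : 0 <= x ->
  (forall w u, 0 <= u <= x -> is_derive (fun t => Re (w * h t)) u (Re (w * h' u))) ->
  (forall u, 0 <= u <= x -> Cmod (h' u) <= B) ->
  Cmod (h x) <= Cmod (h 0) + x * B.
Proof.
  intros Hx Hd HB. apply Cmod_le_of_Re_le. intros w Hw.
  destruct (MVT_gen (fun t => Re (w * h t)) 0 x (fun u => Re (w * h' u)))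
    as [c [Hc Heq]].
  - intros u Hu. rewrite Rmin_left, Rmax_right in Hu by lra. apply Hd. lra.
  - intros u Hu. rewrite Rmin_left, Rmax_right in Hu by lra.
    apply continuity_pt_filterlim, (ex_derive_continuous (V := R_NormedModule)).
    eexists. apply Hd. lra.
  - rewrite Rmin_left, Rmax_right in Hc by lra.
    pose proof (Re_mul_le_Cmod w (h 0) Hw).
    pose proof (Rle_trans _ _ _ (Re_mul_le_Cmod w (h' c) Hw) (HB c Hc)).
    nra.
Qed.

Lemma Cmod_qpow q w : Cmod (qpow q w) = Rpower q (Re w).
Proof.
  unfold qpow, Cmod; cbn [fst snd].
  assert (Hp : 0 < Rpower q (Re w)) by apply Rpower_gt0.
  set (th := Im w * ln q).
  replace ((Rpower q (Re w) * cos th) ^ 2 + (Rpower q (Re w) * sin th) ^ 2)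
    with (Rpower q (Re w) ^ 2) by (pose proof (sin2_cos2 th); unfold Rsqr in *; nra).
  apply sqrt_pow2. lra.
Qed.

Lemma qpow_1_l w : qpow 1 w = 1%C.
Proof.
  unfold qpow, Rpower. rewrite ln_1, !Rmult_0_r, exp_0, cos_0, sin_0.
  unfold RtoC. f_equal; ring.
Qed.

Lemma qpow_add_nat q w k :
  0 < q -> qpow q (w + RtoC (INR k)) = (qpow q w * RtoC (q ^ k))%C.
Proof.
  intros Hq. unfold qpow. simpl. rewrite Rplus_0_r, Rpower_plus, Rpower_pow by exact Hq.
  unfold Cmult, RtoC, Re, Im; simpl. f_equal; ring.
Qed.

Lemma Cmod_qpow_1_sub_div_le s u q : 0 <= u <= q -> q < 1 ->
  Cmod (qpow (1 - u) s * RtoC (/ (1 - u))) <= Rpower (1 - q) (- Rabs (Re s - 1)).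
Proof.
  intros Hu Hq.
  rewrite Cmod_mult, Cmod_qpow, Cmod_R, Rabs_right
    by (apply Rle_ge, Rlt_le, Rinv_0_lt_compat; lra).
  replace (Rpower (1 - u) (Re s) * / (1 - u)) with (Rpower (1 - u) (Re s - 1)).
  - apply Rpower_1_sub_le; lra.
  - replace (Re s - 1) with (Re s + - (1)) by ring.
    rewrite Rpower_plus, Rpower_Ropp, Rpower_1 by lra. reflexivity.
Qed.

(** * Finite sums and complex series *)

Fixpoint csum (f : nat -> C) (n : nat) : C :=
  match n with O => 0%C | S n => (csum f n + f n)%C end.

Lemma csum_ext f g n : (forall k, (k < n)%nat -> f k = g k) -> csum f n = csum g n.
Proof.
  induction n as [|n IH]; intros H; simpl; [reflexivity |].
  rewrite IH, H; [reflexivity | lia | intros k Hk; apply H; lia].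
Qed.

Lemma csum_plus f g n : csum (fun k => f k + g k)%C n = (csum f n + csum g n)%C.
Proof. induction n as [|n IH]; simpl; [ring |]. rewrite IH. ring. Qed.

Lemma csum_mult_l c f n : csum (fun k => c * f k)%C n = (c * csum f n)%C.
Proof. induction n as [|n IH]; simpl; [ring |]. rewrite IH. ring. Qed.

Lemma csum_swap (F : nat -> nat -> C) m n :
  csum (fun i => csum (F i) n) m = csum (fun j => csum (fun i => F i j) m) n.
Proof.
  induction m as [|m IH]; simpl.
  - induction n as [|n IHn]; simpl; [reflexivity |]. rewrite <- IHn. ring.
  - rewrite IH, <- csum_plus. reflexivity.
Qed.

Lemma csum_add f m n : csum f (m + n) = (csum f m + csum (fun k => f (m + k)%nat) n)%C.
Proof.
  induction n as [|n IH]; simpl; [rewrite Nat.add_0_r; ring |].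
  rewrite Nat.add_succ_r. simpl. rewrite IH. ring.
Qed.

Lemma Cmod_csum_le_const f n c :
  (forall k, (k < n)%nat -> Cmod (f k) <= c) -> Cmod (csum f n) <= INR n * c.
Proof.
  induction n as [|n IH]; intros H; simpl csum.
  - rewrite Cmod_0. simpl. lra.
  - eapply Rle_trans; [apply Cmod_triangle |]. rewrite S_INR.
    pose proof (IH (fun k Hk => H k ltac:(lia))). pose proof (H n ltac:(lia)). lra.
Qed.

Lemma Cmod_csum_le_geom f n c th : 0 <= c -> 0 <= th < 1 ->
  (forall k, Cmod (f k) <= c * th ^ S k) -> Cmod (csum f n) <= c * (th / (1 - th)).
Proof.
  intros Hc Ht H.
  assert (Hn : Cmod (csum f n) <= c * (th * (1 - th ^ n) / (1 - th))).
  { induction n as [|n IH]; simpl csum.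
    - rewrite Cmod_0. simpl. right. field. lra.
    - eapply Rle_trans; [apply Cmod_triangle |].
      apply Rle_trans with (c * (th * (1 - th ^ n) / (1 - th)) + c * th ^ S n).
      + apply Rplus_le_compat; [exact IH | apply H].
      + right. simpl. field. lra. }
  eapply Rle_trans; [exact Hn |]. apply Rmult_le_compat_l; [exact Hc |].
  unfold Rdiv. apply Rmult_le_compat_r; [apply Rlt_le, Rinv_0_lt_compat; lra |].
  pose proof (pow_le th n (proj1 Ht)). nra.
Qed.

Lemma is_lim_seq_Cmod_csum (F : nat -> nat -> C) n :
  (forall k, (k < n)%nat -> is_lim_seq (fun M => Cmod (F k M)) 0) ->
  is_lim_seq (fun M => Cmod (csum (fun k => F k M) n)) 0.
Proof.
  induction n as [|n IH]; intros H; simpl csum.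
  - eapply is_lim_seq_ext; [| apply is_lim_seq_const]. intros M. simpl. now rewrite Cmod_0.
  - assert (L := is_lim_seq_plus' _ _ _ _ (IH (fun k Hk => H k ltac:(lia))) (H n ltac:(lia))).
    rewrite Rplus_0_r in L.
    apply is_lim_seq_le_le with (2 := is_lim_seq_const 0) (3 := L).
    intros M. split; [apply Cmod_ge_0 | apply Cmod_triangle].
Qed.

Lemma geom_sum_remainder (w : C) M : w <> 1%C ->
  (w / (1 - w))%C = (csum (fun m => w ^ S m) M + w ^ M * (w / (1 - w)))%C.
Proof.
  intros Hw. assert (H1 : (1 - w)%C <> 0%C) by (intros E; apply Hw; symmetry; apply Ceq_minus, E).
  induction M as [|M IH]; simpl csum.
  - simpl. ring.
  - rewrite IH at 1. simpl. field. exact H1.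
Qed.

Lemma ex_series_Re_Im_of_Cmod_le (a : nat -> C) (b : nat -> R) n0 :
  ex_series b -> (forall k, Cmod (a (n0 + k)%nat) <= b k) ->
  ex_series (fun k => Re (a k)) /\ ex_series (fun k => Im (a k)).
Proof.
  intros Hb H. split; apply (ex_series_incr_n _ n0);
    apply (@ex_series_le R_AbsRing R_CompleteNormedModule _ b); try exact Hb;
    intros k; eapply Rle_trans; try apply H.
  - apply re_le_Cmod.
  - apply im_le_Cmod.
Qed.

Lemma sum_n_Re_csum (f : nat -> C) N : sum_n (fun k => Re (f k)) N = Re (csum f (S N)).
Proof.
  induction N as [|N IH]; [rewrite sum_O | rewrite sum_Sn, IH]; simpl csum; rewrite re_plus;
    [simpl; ring | reflexivity].
Qed.

Lemma sum_n_Im_csum (f : nat -> C) N : sum_n (fun k => Im (f k)) N = Im (csum f (S N)).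
Proof.
  induction N as [|N IH]; [rewrite sum_O | rewrite sum_Sn, IH]; simpl csum; rewrite im_plus;
    [simpl; ring | reflexivity].
Qed.

Lemma Cmod_CSeries_le (a : nat -> C) n0 B (e : nat -> R) :
  ex_series (fun k => Re (a k)) -> ex_series (fun k => Im (a k)) -> is_lim_seq e 0 ->
  (forall j, Cmod (csum a (n0 + j)) <= B + e j) -> Cmod (CSeries a) <= B.
Proof.
  intros HR HI He Hb.
  set (LR := Series (fun k => Re (a k))). set (LI := Series (fun k => Im (a k))).
  set (p j := csum a (n0 + S j)).
  assert (HpR : is_lim_seq (fun j => Re (p j)) LR).
  { assert (L : is_lim_seq (sum_n (fun k => Re (a k))) LR) by exact (Series_correct _ HR).
    apply (is_lim_seq_incr_n _ n0) in L.
    eapply is_lim_seq_ext; [| exact L]. intros j. unfold p.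
    rewrite sum_n_Re_csum. do 3 f_equal. lia. }
  assert (HpI : is_lim_seq (fun j => Im (p j)) LI).
  { assert (L : is_lim_seq (sum_n (fun k => Im (a k))) LI) by exact (Series_correct _ HI).
    apply (is_lim_seq_incr_n _ n0) in L.
    eapply is_lim_seq_ext; [| exact L]. intros j. unfold p.
    rewrite sum_n_Im_csum. do 3 f_equal. lia. }
  apply le_of_le_plus_lim with
    (e := fun j => e (S j) + Rabs (LR - Re (p j)) + Rabs (LI - Im (p j))).
  - assert (L := is_lim_seq_plus' _ _ _ _
      (is_lim_seq_plus' _ _ _ _ (proj1 (is_lim_seq_incr_1 e 0) He) (is_lim_seq_Rabs_sub _ _ HpR))
      (is_lim_seq_Rabs_sub _ _ HpI)).
    rewrite !Rplus_0_r in L. exact L.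
  - intros j.
    replace (CSeries a) with (p j + ((LR - Re (p j))%R, (LI - Im (p j))%R))%C.
    + eapply Rle_trans; [apply Cmod_triangle |].
      assert (Hj : Cmod (p j) <= B + e (S j)) by apply Hb.
      pose proof (Cmod_le_Rabs_add (LR - Re (p j)) (LI - Im (p j))). lra.
    + destruct (p j) as [x y]. unfold CSeries. fold LR LI. unfold Cplus. simpl. f_equal; ring.
Qed.

(** * Generalized binomial coefficients *)

Fixpoint binomR (a : R) (k : nat) : R :=
  match k with O => 1 | S k => binomR a k * (a + INR k) / (INR k + 1) end.

Lemma binomR_ge0 a k : 0 <= a -> 0 <= binomR a k.
Proof.
  intros Ha. induction k as [|k IH]; simpl; [lra |]. pose proof (pos_INR k).
  apply Rdiv_le_0_compat; [apply Rmult_le_pos |]; lra.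
Qed.

Lemma binomR_gt0 a k : 0 < a -> 0 < binomR a k.
Proof.
  intros Ha. induction k as [|k IH]; simpl; [lra |]. pose proof (pos_INR k).
  apply Rdiv_lt_0_compat; [apply Rmult_lt_0_compat |]; lra.
Qed.

Lemma binomR_le_pow a k : 0 <= a -> binomR a k <= (a + INR k) ^ k.
Proof.
  intros Ha. induction k as [|k IH]; cbn [binomR pow]; [lra |].
  pose proof (pos_INR k). pose proof (binomR_ge0 a k Ha). rewrite S_INR.
  assert ((a + INR k) ^ k <= (a + (INR k + 1)) ^ k) by (apply pow_incr; lra).
  assert ((a + INR k) / (INR k + 1) <= a + INR k).
  { apply Rcomplements.Rle_div_l; nra. }
  apply Rle_trans with (binomR a k * (a + (INR k + 1))).
  - unfold Rdiv. rewrite Rmult_assoc. apply Rmult_le_compat_l; [lra |].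
    unfold Rdiv in *. lra.
  - rewrite Rmult_comm. apply Rmult_le_compat_l; lra.
Qed.

Lemma binomR_le_pow_of_le a k n :
  0 <= a -> (k <= n)%nat -> 1 <= a + INR n -> binomR a k <= (a + INR n) ^ n.
Proof.
  intros Ha Hkn H1. pose proof (pos_INR k). pose proof (le_INR _ _ Hkn).
  eapply Rle_trans; [apply binomR_le_pow, Ha |].
  apply Rle_trans with ((a + INR n) ^ k); [apply pow_incr; lra |].
  apply Rle_pow; [exact H1 | exact Hkn].
Qed.

Lemma Cmod_binomC_le s k : Cmod (binomC s k) <= binomR (Cmod s) k.
Proof.
  induction k as [|k IH]; simpl; [rewrite Cmod_1; lra |].
  pose proof (pos_INR k).
  assert (Hk : RtoC (INR k + 1) <> 0%C) by (intros E; apply RtoC_inj in E; lra).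
  rewrite Cmod_div, !Cmod_mult, !Cmod_R, Rabs_right by (lra || exact Hk).
  apply Rmult_le_compat_r; [apply Rlt_le, Rinv_0_lt_compat; lra |].
  apply Rmult_le_compat; try apply Cmod_ge_0; [exact IH |].
  eapply Rle_trans; [apply Cmod_triangle |]. rewrite Cmod_R, Rabs_right; lra.
Qed.

Lemma binomC_succ s k :
  (binomC s (S k) * RtoC (INR k + 1) = binomC s k * (s + RtoC (INR k)))%C.
Proof.
  pose proof (pos_INR k).
  assert (Hk : RtoC (INR k + 1) <> 0%C) by (intros E; apply RtoC_inj in E; lra).
  simpl. field. exact Hk.
Qed.

Lemma ex_series_binomR_geom a q : 0 < a -> 0 < q < 1 ->
  ex_series (fun k => (a + INR k) * binomR a k * q ^ k).
Proof.
  intros Ha Hq.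
  assert (Hpos : forall k, 0 < (a + INR k) * binomR a k * q ^ k).
  { intros k. pose proof (pos_INR k). pose proof (binomR_gt0 a k Ha).
    pose proof (pow_lt q k (proj1 Hq)). repeat apply Rmult_lt_0_compat; lra. }
  eapply ex_series_ext; [intros k; apply Rabs_right, Rle_ge, Rlt_le, Hpos |].
  apply ex_series_DAlembert with q; [lra | intros k; specialize (Hpos k); lra |].
  (* the ratio of consecutive terms is q (a + k + 1) / (k + 1) *)
  apply is_lim_seq_ext with (u := fun k => q + a * q * / INR (S k)).
  { intros k. pose proof (Hpos k). pose proof (pos_INR k). pose proof (binomR_gt0 a k Ha).
    pose proof (pow_lt q k (proj1 Hq)).
    rewrite Rabs_right.
    - simpl binomR. rewrite S_INR. simpl. field. repeat split; lra.
    - apply Rle_ge, Rlt_le, Rdiv_lt_0_compat; [apply Hpos | lra]. }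
  assert (Hinv : is_lim_seq (fun k => / INR (S k)) 0).
  { replace (Finite 0) with (Rbar_inv p_infty) by reflexivity.
    apply is_lim_seq_inv; [| discriminate].
    apply (is_lim_seq_incr_1 INR p_infty), is_lim_seq_INR. }
  assert (L := is_lim_seq_plus' _ _ _ _ (is_lim_seq_const q)
                 (is_lim_seq_scal_l _ (a * q) _ Hinv)).
  simpl in L. rewrite Rmult_0_r, Rplus_0_r in L. exact L.
Qed.

Lemma ex_series_binomR_pow a q : 0 < a -> 0 < q < 1 -> ex_series (fun k => binomR a k * q ^ k).
Proof.
  intros Ha Hq.
  apply (@ex_series_le R_AbsRing R_CompleteNormedModule _
           (fun k => (a + INR k) * binomR a k * q ^ k * / a)).
  - intros k. change (norm ?x) with (Rabs x).
    pose proof (pos_INR k). pose proof (binomR_ge0 a k (Rlt_le _ _ Ha)).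
    assert (Hp : 0 <= binomR a k * q ^ k) by (apply Rmult_le_pos, pow_le; lra).
    pose proof (Rmult_le_pos _ _ Hp (Rdiv_le_0_compat (INR k) a ltac:(lra) Ha)).
    rewrite Rabs_right by lra.
    replace ((a + INR k) * binomR a k * q ^ k * / a)
      with (binomR a k * q ^ k + binomR a k * q ^ k * (INR k / a)) by (field; lra).
    lra.
  - apply ex_series_scal_r, ex_series_binomR_geom; assumption.
Qed.

Lemma is_lim_seq_INR_binomR_pow a q : 0 < a -> 0 < q < 1 ->
  is_lim_seq (fun k => INR k * binomR a k * q ^ k) 0.
Proof.
  intros Ha Hq.
  apply is_lim_seq_le_le with (u := fun _ => 0) (w := fun k => (a + INR k) * binomR a k * q ^ k).
  - intros k. pose proof (pos_INR k).
    assert (Hp : 0 <= binomR a k * q ^ k)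
      by (apply Rmult_le_pos; [apply binomR_ge0 | apply pow_le]; lra).
    rewrite !Rmult_assoc. split; [apply Rmult_le_pos | apply Rmult_le_compat_r]; lra.
  - apply is_lim_seq_const.
  - apply ex_series_lim_0, ex_series_binomR_geom; assumption.
Qed.

(** * Truncations of the binomial series of (1 - x)^(-s) *)

Definition binom_trunc (s : C) (N : nat) (x : R) : C :=
  csum (fun k => binomC s k * RtoC (x ^ k))%C N.

Lemma binom_trunc_S s N x :
  binom_trunc s (S N) x = (binom_trunc s N x + binomC s N * RtoC (x ^ N))%C.
Proof. reflexivity. Qed.

Lemma binom_trunc_S_0 s N : binom_trunc s (S N) 0 = 1%C.
Proof.
  induction N as [|N IH]; rewrite binom_trunc_S.
  - unfold binom_trunc; cbn [csum pow binomC]. ring.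
  - rewrite IH, pow_i by lia. ring.
Qed.

Lemma Cmod_binom_trunc_sub_at_0 s n0 N x : (n0 <= N)%nat -> 0 <= x ->
  Cmod (binom_trunc s N 0 - binom_trunc s n0 0) <= x ^ n0.
Proof.
  intros HnN Hx. destruct n0 as [|n0], N as [|N]; try lia.
  - unfold binom_trunc; cbn [csum pow]. replace (0 - 0)%C with (RtoC 0) by ring.
    rewrite Cmod_0. lra.
  - rewrite binom_trunc_S_0. unfold binom_trunc; cbn [csum pow].
    replace (1 - 0)%C with (RtoC 1) by ring. rewrite Cmod_1. lra.
  - rewrite !binom_trunc_S_0. replace (1 - 1)%C with (RtoC 0) by ring.
    rewrite Cmod_0. apply pow_le, Hx.
Qed.

Lemma is_derive_Re_qpow_pow (w s : C) n u : u < 1 ->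
  is_derive (fun t => Re (w * qpow (1 - t) s * RtoC (t ^ n))) u
    (Re (w * qpow (1 - u) s * RtoC (/ (1 - u))
         * (RtoC (INR n * u ^ pred n) - (s + RtoC (INR n)) * RtoC (u ^ n)))).
Proof.
  intros Hu. destruct w as [w1 w2], s as [sg v].
  apply is_derive_ext with (f := fun t =>
    (w1 * exp (sg * ln (1 - t)) * cos (v * ln (1 - t))
     - w2 * exp (sg * ln (1 - t)) * sin (v * ln (1 - t))) * t ^ n).
  { intros t. unfold qpow, Rpower, RtoC, Cmult, Re, Im; simpl. ring. }
  auto_derive; [lra |].
  unfold qpow, Rpower, RtoC, Cmult, Cminus, Cplus, Copp, Re, Im; simpl.
  replace (1 + - u) with (1 - u) by ring.
  destruct n; simpl; field; lra.
Qed.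

(* The derivative telescopes because (k + 1) C(s+k,k+1) = (s + k) C(s+k-1,k). *)
Lemma is_derive_Re_qpow_binom_trunc (w s : C) N u : u < 1 ->
  is_derive (fun t => Re (w * (qpow (1 - t) s * binom_trunc s N t))) u
    (Re (- w * qpow (1 - u) s * RtoC (/ (1 - u))
         * (RtoC (INR N * u ^ pred N) * binomC s N))).
Proof.
  intros Hu. induction N as [|N IH].
  - apply is_derive_ext with (f := fun _ => 0).
    { intros t. unfold binom_trunc; cbn [csum]. rewrite !Cmult_0_r. reflexivity. }
    replace (Re _) with 0; [auto_derive; auto |].
    simpl INR. rewrite Rmult_0_l, Cmult_0_l, Cmult_0_r. reflexivity.
  - apply is_derive_ext with (f := fun t =>
      Re (w * (qpow (1 - t) s * binom_trunc s N t))
      + Re (w * binomC s N * qpow (1 - t) s * RtoC (t ^ N))).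
    { intros t. rewrite binom_trunc_S, <- re_plus. f_equal. ring. }
    assert (Hd := is_derive_plus _ _ _ _ _ IH
                    (is_derive_Re_qpow_pow (w * binomC s N) s N u Hu)).
    match type of Hd with is_derive _ _ ?d => replace (Re _) with d; [exact Hd |] end.
    change (plus ?x ?y) with (x + y). rewrite <- re_plus. f_equal. simpl pred.
    replace (RtoC (INR (S N) * u ^ N) * binomC s (S N))%C
      with (RtoC (u ^ N) * (binomC s (S N) * RtoC (INR N + 1)))%C
      by (rewrite S_INR, RtoC_mult; ring).
    rewrite binomC_succ. ring.
Qed.

Lemma Cmod_pow_pred_binomC_le s n u x : 0 <= u <= x ->
  Cmod (RtoC (INR n * u ^ pred n) * binomC s n) <= INR n * binomR (Cmod s) n * x ^ pred n.
Proof.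
  intros Hu. pose proof (pos_INR n).
  rewrite Cmod_mult, Cmod_R, Rabs_right by (apply Rle_ge, Rmult_le_pos, pow_le; lra).
  replace (INR n * binomR (Cmod s) n * x ^ pred n)
    with (INR n * (x ^ pred n * binomR (Cmod s) n)) by ring.
  rewrite Rmult_assoc. apply Rmult_le_compat_l; [lra |].
  apply Rmult_le_compat; [apply pow_le; lra | apply Cmod_ge_0 | apply pow_incr; lra |].
  apply Cmod_binomC_le.
Qed.

Lemma is_derive_Re_qpow_binom_trunc_sub (w s : C) n0 N u : u < 1 ->
  is_derive (fun t => Re (w * (qpow (1 - t) s * (binom_trunc s N t - binom_trunc s n0 t)))) u
    (Re (w * (qpow (1 - u) s * RtoC (/ (1 - u))
              * (RtoC (INR n0 * u ^ pred n0) * binomC s n0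
                 - RtoC (INR N * u ^ pred N) * binomC s N)))).
Proof.
  intros Hu.
  apply is_derive_ext with (f := fun t =>
    Re (w * (qpow (1 - t) s * binom_trunc s N t))
    - Re (w * (qpow (1 - t) s * binom_trunc s n0 t))).
  { intros t. rewrite <- re_minus. f_equal. ring. }
  assert (Hd := is_derive_minus _ _ _ _ _
    (is_derive_Re_qpow_binom_trunc w s N u Hu) (is_derive_Re_qpow_binom_trunc w s n0 u Hu)).
  match type of Hd with is_derive _ _ ?d => replace (Re _) with d; [exact Hd |] end.
  change (minus ?a ?b) with (a - b). rewrite <- re_minus. f_equal. ring.
Qed.

Lemma Cmod_binom_trunc_sub_le s n0 N q x : (n0 <= N)%nat -> 0 <= x <= q -> q < 1 ->
  Cmod (binom_trunc s N x - binom_trunc s n0 x) <=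
  Rpower (1 - q) (- Rabs (Re s)) *
  (x ^ n0 + Rpower (1 - q) (- Rabs (Re s - 1)) *
            (INR n0 * binomR (Cmod s) n0 * x ^ n0 + INR N * binomR (Cmod s) N * x ^ N)).
Proof.
  intros HnN Hx Hq.
  set (a := Cmod s). set (L := Rpower (1 - q) (- Rabs (Re s - 1))).
  set (D u := (binom_trunc s N u - binom_trunc s n0 u)%C).
  set (h u := (qpow (1 - u) s * D u)%C).
  set (h' u := (qpow (1 - u) s * RtoC (/ (1 - u))
                * (RtoC (INR n0 * u ^ pred n0) * binomC s n0
                   - RtoC (INR N * u ^ pred N) * binomC s N))%C).
  assert (Hh : Cmod (h x) <= Cmod (h 0) +
            x * (L * (INR n0 * binomR a n0 * x ^ pred n0 + INR N * binomR a N * x ^ pred N))).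
  { apply (Cmod_mean_value h h'); [lra | |].
    - intros w u Hu. apply is_derive_Re_qpow_binom_trunc_sub. lra.
    - intros u Hu. unfold h'. rewrite Cmod_mult.
      apply Rmult_le_compat; try apply Cmod_ge_0; [apply Cmod_qpow_1_sub_div_le; lra |].
      unfold Cminus. eapply Rle_trans; [apply Cmod_triangle |]. rewrite Cmod_opp.
      apply Rplus_le_compat; apply Cmod_pow_pred_binomC_le, Hu. }
  assert (Hh0 : Cmod (h 0) <= x ^ n0).
  { unfold h. rewrite Rminus_0_r, qpow_1_l, Cmult_1_l.
    apply Cmod_binom_trunc_sub_at_0; [exact HnN | lra]. }
  replace (x * (L * (INR n0 * binomR a n0 * x ^ pred n0 + INR N * binomR a N * x ^ pred N)))
    with (L * (binomR a n0 * (INR n0 * (x * x ^ pred n0))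
               + binomR a N * (INR N * (x * x ^ pred N)))) in Hh by ring.
  rewrite !INR_mul_pow_pred in Hh.
  (* undo the factor (1 - x)^s, whose modulus (1 - x)^(Re s) does not depend on Im s *)
  assert (HD : Cmod (D x) = Rpower (1 - x) (- Re s) * Cmod (h x)).
  { unfold h. rewrite Cmod_mult, Cmod_qpow, Rpower_Ropp.
    field. apply Rgt_not_eq, Rpower_gt0. }
  change (Cmod (D x) <= Rpower (1 - q) (- Rabs (Re s)) *
     (x ^ n0 + L * (INR n0 * binomR a n0 * x ^ n0 + INR N * binomR a N * x ^ N))).
  rewrite HD. apply Rmult_le_compat; [apply Rlt_le, Rpower_gt0 | apply Cmod_ge_0 | |].
  - rewrite <- (Rabs_Ropp (Re s)). apply Rpower_1_sub_le; lra.
  - lra.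
Qed.

(** * The series defining zeta_q *)

Section ZetaQSeries.

Variables (q : R) (s : C) (n0 : nat).
Hypothesis Hq : 0 < q < 1.
Hypothesis Hn0 : 0 < Re s - 1 + INR n0.

Local Notation z := (qpow q (s - 1)).
Local Notation y k := (Cmult z (RtoC (pow q k))).
Local Notation term k := (Cmult (binomC s k) (Cdiv (y k) (Cminus (RtoC 1) (y k)))).
Local Notation rho := (Rpower q (Re s - 1)).
Local Notation theta := (Rpower q (Re s - 1 + INR n0)).
Local Notation Lam0 := (Rpower (1 - q) (- Rabs (Re s))).
Local Notation Lam1 := (Rpower (1 - q) (- Rabs (Re s - 1))).
(* The constants of [Cmod_binom_trunc_sub_le] once the factor theta^(m+1) is pulled out. *)
Local Notation A := (Lam0 * (1 + Lam1 * INR n0 * binomR (Cmod s) n0)).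
Local Notation B N := (Lam0 * Lam1 * INR N * binomR (Cmod s) N).

Lemma Cmod_z : Cmod z = rho.
Proof. rewrite Cmod_qpow, re_minus, re_RtoC. reflexivity. Qed.

Lemma Cmod_y k : Cmod (y k) = rho * q ^ k.
Proof.
  rewrite Cmod_mult, Cmod_z, Cmod_R, Rabs_right; [reflexivity |].
  apply Rle_ge, pow_le. lra.
Qed.

Lemma theta_eq : theta = rho * q ^ n0.
Proof. rewrite Rpower_plus, Rpower_pow by lra. reflexivity. Qed.

Lemma theta_bounds : 0 < theta < 1.
Proof. split; [apply Rpower_gt0 | apply Rpower_lt_1; lra]. Qed.

Lemma Cmod_y_le k : (n0 <= k)%nat -> Cmod (y k) <= theta.
Proof.
  intros Hk. rewrite Cmod_y, theta_eq.
  apply Rmult_le_compat_l; [apply Rlt_le, Rpower_gt0 |].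
  replace k with (n0 + (k - n0))%nat by lia. rewrite pow_add.
  assert (q ^ (k - n0) <= 1) by (rewrite <- (pow1 (k - n0)); apply pow_incr; lra).
  pose proof (pow_le q n0). nra.
Qed.

Lemma y_ne_1 k : (n0 <= k)%nat -> y k <> 1%C.
Proof.
  intros Hk E. pose proof (Cmod_y_le k Hk). pose proof theta_bounds.
  rewrite E, Cmod_1 in *. lra.
Qed.

Lemma Cmod_term_le k : (n0 <= k)%nat ->
  Cmod (term k) <= binomR (Cmod s) k * q ^ k * (rho / (1 - theta)).
Proof.
  intros Hk. pose proof (Cmod_y_le k Hk). pose proof theta_bounds.
  pose proof (Cmod_1_sub_ge (y k)). pose proof (Cmod_ge_0 (y k)) as Hy0.
  assert (Hne : (1 - y k)%C <> 0%C) by (intros E; rewrite E, Cmod_0 in *; lra).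
  rewrite Cmod_mult, Cmod_div by exact Hne. rewrite Cmod_y in *.
  replace (binomR (Cmod s) k * q ^ k * (rho / (1 - theta)))
    with (binomR (Cmod s) k * (rho * q ^ k / (1 - theta))) by (field; lra).
  apply Rmult_le_compat; [apply Cmod_ge_0 | apply Rdiv_le_0_compat; lra | apply Cmod_binomC_le |].
  unfold Rdiv. apply Rmult_le_compat_l; [lra |]. apply Rinv_le_contravar; lra.
Qed.

Lemma ex_series_term : s <> 0%C ->
  ex_series (fun k => Re (term k)) /\ ex_series (fun k => Im (term k)).
Proof.
  intros Hs. apply Cmod_gt_0 in Hs.
  apply (ex_series_Re_Im_of_Cmod_le _
    (fun k => binomR (Cmod s) (n0 + k) * q ^ (n0 + k) * (rho / (1 - theta))) n0).
  - apply ex_series_scal_r, (ex_series_incr_n (fun k => binomR (Cmod s) k * q ^ k) n0).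
    apply ex_series_binomR_pow; assumption.
  - intros k. apply Cmod_term_le. lia.
Qed.

Lemma Cmod_csum_term_head_le eps : 0 < eps ->
  (forall k, (k < n0)%nat -> eps <= Cmod (1 - y k)) ->
  Cmod (csum (fun k => term k) n0) <= INR n0 * ((Cmod s + INR n0) ^ n0 * rho / eps).
Proof.
  intros He Hsp. apply Cmod_csum_le_const. intros k Hk. specialize (Hsp k Hk).
  assert (Hne : (1 - y k)%C <> 0%C) by (intros E; rewrite E, Cmod_0 in Hsp; lra).
  rewrite Cmod_mult, Cmod_div, Cmod_y by exact Hne.
  assert (Hb : Cmod (binomC s k) <= (Cmod s + INR n0) ^ n0).
  { eapply Rle_trans; [apply Cmod_binomC_le |].
    pose proof (Cmod_ge_0 s). pose proof (le_INR 1 n0 ltac:(lia)) as H1. simpl INR in H1.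
    apply binomR_le_pow_of_le; [lra | lia | lra]. }
  assert (Hy : rho * q ^ k / Cmod (1 - y k) <= rho / eps).
  { pose proof (Cmod_ge_0 (y k)) as Hy0. rewrite Cmod_y in Hy0.
    assert (q ^ k <= 1) by (rewrite <- (pow1 k); apply pow_incr; lra).
    pose proof (Rpower_gt0 q (Re s - 1)).
    unfold Rdiv. apply Rmult_le_compat; [lra | apply Rlt_le, Rinv_0_lt_compat; lra | nra |].
    apply Rinv_le_contravar; lra. }
  apply Rle_trans with ((Cmod s + INR n0) ^ n0 * (rho / eps)).
  - apply Rmult_le_compat; [apply Cmod_ge_0 | | exact Hb | exact Hy].
    rewrite <- Cmod_y. apply Rdiv_le_0_compat; [apply Cmod_ge_0 | lra].
  - right. unfold Rdiv. ring.
Qed.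

Lemma csum_term_tail_expand j M :
  csum (fun i => term (n0 + i)%nat) j =
  (csum (fun m => z ^ S m * (binom_trunc s (n0 + j) (q ^ S m) - binom_trunc s n0 (q ^ S m))) M
   + csum (fun i => binomC s (n0 + i) * y (n0 + i)%nat ^ M
                    * (y (n0 + i)%nat / (1 - y (n0 + i)%nat))) j)%C.
Proof.
  rewrite (csum_ext _ (fun i =>
    binomC s (n0 + i) * csum (fun m => y (n0 + i)%nat ^ S m) M
    + binomC s (n0 + i) * y (n0 + i)%nat ^ M * (y (n0 + i)%nat / (1 - y (n0 + i)%nat)))%C).
  2: { intros i _. rewrite (geom_sum_remainder (y (n0 + i)%nat) M) at 1 by (apply y_ne_1; lia).
       ring. }
  rewrite csum_plus. f_equal.
  rewrite (csum_ext _ (fun i => csum (fun m => binomC s (n0 + i) * y (n0 + i)%nat ^ S m) M)%C)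
    by (intros i _; symmetry; apply csum_mult_l).
  rewrite csum_swap. apply csum_ext. intros m _.
  unfold binom_trunc. rewrite csum_add.
  match goal with |- _ = (_ * (?u + ?w - ?u))%C => replace (u + w - u)%C with w by ring end.
  rewrite <- csum_mult_l. apply csum_ext. intros i _.
  rewrite Cpow_mult_l, <- !RtoC_pow, <- !pow_mult, Nat.mul_comm. ring.
Qed.

Lemma tail_coeffs_ge0 N : 0 <= A /\ 0 <= B N.
Proof.
  pose proof (Rpower_gt0 (1 - q) (- Rabs (Re s))).
  pose proof (Rpower_gt0 (1 - q) (- Rabs (Re s - 1))).
  pose proof (binomR_ge0 (Cmod s) n0 (Cmod_ge_0 s)).
  pose proof (binomR_ge0 (Cmod s) N (Cmod_ge_0 s)).
  pose proof (pos_INR n0). pose proof (pos_INR N).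
  split; [apply Rmult_le_pos; [lra |] |]; repeat apply Rmult_le_pos; try lra.
  assert (0 <= Lam1 * INR n0 * binomR (Cmod s) n0) by (repeat apply Rmult_le_pos; lra). lra.
Qed.

Lemma is_lim_seq_tail_remainder j :
  is_lim_seq (fun M => Cmod (csum (fun i =>
    binomC s (n0 + i) * y (n0 + i)%nat ^ M * (y (n0 + i)%nat / (1 - y (n0 + i)%nat)))%C j)) 0.
Proof.
  apply is_lim_seq_Cmod_csum. intros i _.
  set (c := Cmod (binomC s (n0 + i))).
  set (d := Cmod (y (n0 + i)%nat / (1 - y (n0 + i)%nat))).
  assert (L : is_lim_seq (fun M => c * Cmod (y (n0 + i)%nat) ^ M * d) (c * 0 * d)).
  { apply is_lim_seq_mult'; [apply is_lim_seq_mult' |]; try apply is_lim_seq_const.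
    apply is_lim_seq_geom. rewrite Rabs_right by apply Rle_ge, Cmod_ge_0.
    pose proof (Cmod_y_le (n0 + i) ltac:(lia)). pose proof theta_bounds. lra. }
  rewrite Rmult_0_r, Rmult_0_l in L.
  eapply is_lim_seq_ext; [| exact L]. intros M. unfold c, d. now rewrite <- Cmod_pow, <- !Cmod_mult.
Qed.

Lemma Cmod_tail_geom_term_le j m :
  Cmod (z ^ S m * (binom_trunc s (n0 + j) (q ^ S m) - binom_trunc s n0 (q ^ S m)))
  <= (A + B (n0 + j)%nat * q ^ j) * theta ^ S m.
Proof.
  set (x := q ^ S m).
  assert (Hx : 0 <= x <= q).
  { unfold x. simpl. pose proof (pow_le q m ltac:(lra)).
    assert (q ^ m <= 1) by (rewrite <- (pow1 m); apply pow_incr; lra). nra. }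
  rewrite Cmod_mult, Cmod_pow, Cmod_z.
  eapply Rle_trans.
  { apply Rmult_le_compat_l; [apply pow_le, Rlt_le, Rpower_gt0 |].
    apply (Cmod_binom_trunc_sub_le s n0 (n0 + j) q x); [lia | exact Hx | lra]. }
  assert (E0 : rho ^ S m * x ^ n0 = theta ^ S m).
  { unfold x. rewrite theta_eq, Rpow_mult_distr, <- pow_mult, <- pow_mult, Nat.mul_comm.
    reflexivity. }
  rewrite pow_add.
  apply Rle_trans with
    (A * (rho ^ S m * x ^ n0) + B (n0 + j)%nat * (rho ^ S m * x ^ n0) * x ^ j); [right; ring |].
  rewrite E0. destruct (tail_coeffs_ge0 (n0 + j)) as [_ HB].
  pose proof (pow_le theta (S m) (Rlt_le _ _ (proj1 theta_bounds))).
  assert (B (n0 + j)%nat * theta ^ S m * x ^ j <= B (n0 + j)%nat * theta ^ S m * q ^ j).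
  { apply Rmult_le_compat_l; [apply Rmult_le_pos; lra | apply pow_incr; lra]. }
  lra.
Qed.

Lemma Cmod_csum_term_tail_le j :
  Cmod (csum (fun i => term (n0 + i)%nat) j)
  <= (A + B (n0 + j)%nat * q ^ j) * (theta / (1 - theta)).
Proof.
  apply (le_of_le_plus_lim _ _ _ (is_lim_seq_tail_remainder j)). intros M.
  rewrite (csum_term_tail_expand j M).
  eapply Rle_trans; [apply Cmod_triangle |]. apply Rplus_le_compat_r.
  destruct (tail_coeffs_ge0 (n0 + j)) as [HA HB].
  pose proof (Rmult_le_pos _ _ HB (pow_le q j ltac:(lra))). pose proof theta_bounds.
  apply Cmod_csum_le_geom; [lra | lra | apply Cmod_tail_geom_term_le].
Qed.

Lemma is_lim_seq_tail_error : s <> 0%C ->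
  is_lim_seq (fun j => B (n0 + j)%nat * q ^ j * (theta / (1 - theta))) 0.
Proof.
  intros Hs. apply Cmod_gt_0 in Hs. pose proof theta_bounds. pose proof (pow_lt q n0 ltac:(lra)).
  set (c := Lam0 * Lam1 * (theta / (1 - theta)) / q ^ n0).
  assert (L := is_lim_seq_scal_l _ c _
    (proj1 (is_lim_seq_incr_n _ n0 0) (is_lim_seq_INR_binomR_pow (Cmod s) q Hs Hq))).
  rewrite Rbar_mult_0_r in L. eapply is_lim_seq_ext; [| exact L].
  intros j. unfold c. rewrite (Nat.add_comm j n0), pow_add. field. lra.
Qed.

Lemma Cmod_CSeries_term_le eps : s <> 0%C -> 0 < eps ->
  (forall k, (k < n0)%nat -> eps <= Cmod (1 - y k)) ->
  Cmod (CSeries (fun k => term k))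
  <= INR n0 * ((Cmod s + INR n0) ^ n0 * rho / eps) + A * (theta / (1 - theta)).
Proof.
  intros Hs He Hsp. destruct (ex_series_term Hs) as [HR HI].
  apply (Cmod_CSeries_le _ n0 _ _ HR HI (is_lim_seq_tail_error Hs)).
  intros j. rewrite csum_add. eapply Rle_trans; [apply Cmod_triangle |].
  pose proof (Cmod_csum_term_head_le eps He Hsp). pose proof (Cmod_csum_term_tail_le j). lra.
Qed.

Lemma zeta_q_eq : zeta_q q s = (qpow (1 - q) s * CSeries (fun k => term k))%C.
Proof.
  unfold zeta_q, zeta_q2, CSeries. f_equal. f_equal; apply Series_ext; intros k;
    rewrite qpow_add_nat by lra; f_equal; unfold Cdiv; ring.
Qed.

Lemma Cmod_zeta_q_le eps : s <> 0%C -> 0 < eps ->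
  (forall k, (k < n0)%nat -> eps <= Cmod (1 - y k)) ->
  Cmod (zeta_q q s) <= Rpower (1 - q) (Re s) *
    ((INR n0 * rho / eps + Lam0 * Lam1 * INR n0 * (theta / (1 - theta))) * (Cmod s + INR n0) ^ n0
     + Lam0 * (theta / (1 - theta))).
Proof.
  intros Hs He Hsp. rewrite zeta_q_eq, Cmod_mult, Cmod_qpow.
  apply Rmult_le_compat_l; [apply Rlt_le, Rpower_gt0 |].
  eapply Rle_trans; [apply (Cmod_CSeries_term_le eps Hs He Hsp) |].
  pose proof theta_bounds. pose proof (pos_INR n0).
  assert (Hb : binomR (Cmod s) n0 <= (Cmod s + INR n0) ^ n0) by apply binomR_le_pow, Cmod_ge_0.
  assert (Hc : 0 <= Lam0 * Lam1 * INR n0 * (theta / (1 - theta))).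
  { apply Rmult_le_pos; [| apply Rdiv_le_0_compat; lra].
    repeat apply Rmult_le_pos; try lra; apply Rlt_le, Rpower_gt0. }
  assert (0 <= (Cmod s + INR n0) ^ n0 - binomR (Cmod s) n0) by lra.
  pose proof (Rmult_le_pos _ _ Hc H1). lra.
Qed.

End ZetaQSeries.

(** * Growth of zeta_q on vertical lines *)

Definition away_from_poles (q eps : R) (s : C) : Prop :=
  forall r : Z, (-1 <= r)%Z -> eps <= Cmod (1 - qpow q (RtoC (IZR r) + s)).

Lemma away_from_poles_nat q eps s k : 0 < q -> away_from_poles q eps s ->
  eps <= Cmod (1 - qpow q (s - 1) * RtoC (q ^ k)).
Proof.
  intros Hq H. rewrite <- qpow_add_nat by exact Hq.
  replace (s - 1 + RtoC (INR k))%C with (RtoC (IZR (Z.of_nat k - 1)) + s)%C.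
  - apply H. lia.
  - rewrite minus_IZR, <- INR_IZR_INZ, RtoC_minus. ring.
Qed.

Lemma zeta_q_poly_bound q eps sigma n0 : 0 < q < 1 -> 0 < eps -> 0 < sigma - 1 + INR n0 ->
  exists K, 0 < K /\ forall v, v <> 0 -> away_from_poles q eps (sigma, v) ->
    Cmod (zeta_q q (sigma, v)) <= K * (Rabs sigma + INR n0 + Rabs v) ^ n0.
Proof.
  intros Hq He Hn0.
  set (c := Rpower q (sigma - 1 + INR n0) / (1 - Rpower q (sigma - 1 + INR n0))).
  set (K1 := INR n0 * Rpower q (sigma - 1) / eps
             + Rpower (1 - q) (- Rabs sigma) * Rpower (1 - q) (- Rabs (sigma - 1)) * INR n0 * c).
  set (K2 := Rpower (1 - q) (- Rabs sigma) * c).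
  assert (Hc : 0 < c).
  { apply Rdiv_lt_0_compat; [apply Rpower_gt0 |]. pose proof (Rpower_lt_1 q _ Hq Hn0). lra. }
  assert (HK1 : 0 <= K1).
  { pose proof (pos_INR n0). unfold K1. apply Rplus_le_le_0_compat.
    - apply Rdiv_le_0_compat; [apply Rmult_le_pos; [lra | apply Rlt_le, Rpower_gt0] | exact He].
    - apply Rmult_le_pos; [| lra]. repeat apply Rmult_le_pos; try apply Rlt_le, Rpower_gt0; lra. }
  assert (HK2 : 0 < K2) by (apply Rmult_lt_0_compat; [apply Rpower_gt0 | exact Hc]).
  exists (Rpower (1 - q) sigma * (K1 + K2)). split.
  { apply Rmult_lt_0_compat; [apply Rpower_gt0 | lra]. }
  intros v Hv Hs.
  set (Y := Rabs sigma + INR n0 + Rabs v).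
  assert (HY : Cmod (sigma, v) + INR n0 <= Y).
  { pose proof (Cmod_le_Rabs_add sigma v). unfold Y. lra. }
  assert (HY1 : 1 <= Y ^ n0).
  { unfold Y. destruct n0 as [|n]; [simpl; lra |]. apply pow_R1_Rle.
    pose proof (Rabs_pos sigma). pose proof (Rabs_pos v). pose proof (pos_INR n).
    rewrite S_INR. lra. }
  assert (HP : (Cmod (sigma, v) + INR n0) ^ n0 <= Y ^ n0).
  { apply pow_incr. pose proof (Cmod_ge_0 (sigma, v)). pose proof (pos_INR n0). lra. }
  eapply Rle_trans.
  { apply (Cmod_zeta_q_le q (sigma, v) n0 Hq Hn0 eps).
    - intros E. apply Hv. apply (f_equal Im) in E. exact E.
    - exact He.
    - intros k _. apply away_from_poles_nat; [lra | exact Hs]. }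
  change (Re (sigma, v)) with sigma. fold c. fold K1 K2.
  rewrite Rmult_assoc. apply Rmult_le_compat_l; [apply Rlt_le, Rpower_gt0 |].
  pose proof (Rmult_le_compat_l _ _ _ HK1 HP). nra.
Qed.

Lemma zeta_q_bound_gt1 q eps sigma : 0 < q < 1 -> 0 < eps -> 1 < sigma ->
  exists C0, 0 < C0 /\ forall v, 1 <= Rabs v -> away_from_poles q eps (sigma, v) ->
    Cmod (zeta_q q (sigma, v)) <= C0.
Proof.
  intros Hq He Hs.
  destruct (zeta_q_poly_bound q eps sigma 0 Hq He ltac:(simpl; lra)) as [K [HK Hb]].
  exists K. split; [exact HK |]. intros v Hv Hp.
  assert (Hv0 : v <> 0) by (intros ->; rewrite Rabs_R0 in Hv; lra).
  specialize (Hb v Hv0 Hp). simpl in Hb. lra.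
Qed.

Lemma zeta_q_bound_eq1 q eps : 0 < q < 1 -> 0 < eps ->
  exists C0, 0 < C0 /\ forall v, 1 <= Rabs v -> away_from_poles q eps (1, v) ->
    Cmod (zeta_q q (1, v)) <= C0 * Rabs v.
Proof.
  intros Hq He.
  destruct (zeta_q_poly_bound q eps 1 1 Hq He ltac:(simpl; lra)) as [K [HK Hb]].
  exists (3 * K). split; [lra |]. intros v Hv Hp.
  assert (Hv0 : v <> 0) by (intros ->; rewrite Rabs_R0 in Hv; lra).
  specialize (Hb v Hv0 Hp). rewrite Rabs_R1, pow_1 in Hb. simpl INR in Hb. nra.
Qed.

Lemma zeta_q_bound_lt1 q eps sigma : 0 < q < 1 -> 0 < eps -> sigma < 1 ->
  exists C0, 0 < C0 /\ forall v, 1 <= Rabs v -> away_from_poles q eps (sigma, v) ->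
    Cmod (zeta_q q (sigma, v)) <= C0 * exp (- (sigma - 1) * (1 + PI / 2) * Rabs v).
Proof.
  intros Hq He Hs.
  set (n0 := Z.to_nat (up (1 - sigma))).
  assert (Hn0 : 0 < sigma - 1 + INR n0).
  { destruct (archimed (1 - sigma)) as [Hup _].
    unfold n0. rewrite INR_IZR_INZ, Z2Nat.id; [lra |]. apply le_IZR. lra. }
  destruct (zeta_q_poly_bound q eps sigma n0 Hq He Hn0) as [K [HK Hb]].
  set (c := - (sigma - 1) * (1 + PI / 2)).
  assert (Hc : 0 < c) by (unfold c; pose proof PI_RGT_0; apply Rmult_lt_0_compat; lra).
  exists (K * ((INR n0 + 1) / c) ^ n0 * exp (c * (Rabs sigma + INR n0))). split.
  { apply Rmult_lt_0_compat; [apply Rmult_lt_0_compat; [exact HK |] | apply exp_pos].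
    apply pow_lt, Rdiv_lt_0_compat; [pose proof (pos_INR n0) |]; lra. }
  intros v Hv Hp.
  assert (Hv0 : v <> 0) by (intros ->; rewrite Rabs_R0 in Hv; lra).
  eapply Rle_trans; [apply (Hb v Hv0 Hp) |].
  pose proof (pos_INR n0). pose proof (Rabs_pos sigma). pose proof (Rabs_pos v).
  eapply Rle_trans.
  { apply Rmult_le_compat_l; [lra |]. apply pow_le_exp_mul; [exact Hc | lra]. }
  right. fold c. replace (c * (Rabs sigma + INR n0 + Rabs v))
    with (c * (Rabs sigma + INR n0) + c * Rabs v) by ring.
  rewrite exp_plus. ring.
Qed.

Theorem corollary1p2 (eps q sigma : R) :
  0 < eps -> 0 < q < 1 ->
  exists C0 V0 : R, 0 < C0 /\ 0 < V0 /\
    forall v : R, V0 <= Rabs v ->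
      (exists delta : R, eps < delta /\
         forall r : Z, (-1 <= r)%Z ->
           delta <= Cmod (1 - qpow q (RtoC (IZR r) + (sigma, v)))%C) ->
      (1 < sigma -> Cmod (zeta_q q (sigma, v)) <= C0) /\
      (sigma = 1 -> Cmod (zeta_q q (sigma, v)) <= C0 * Rabs v) /\
      (sigma < 1 -> Cmod (zeta_q q (sigma, v)) <=
                      C0 * exp (- (sigma - 1) * (1 + PI / 2) * Rabs v)).
Proof.
  intros Heps Hq.
  assert (Haway : forall v, (exists delta, eps < delta /\ forall r : Z, (-1 <= r)%Z ->
            delta <= Cmod (1 - qpow q (RtoC (IZR r) + (sigma, v)))%C) ->
          away_from_poles q eps (sigma, v)).
  { intros v [delta [Hd H]] r Hr. specialize (H r Hr). lra. }
  destruct (Rtotal_order sigma 1) as [Hlt | [-> | Hgt]].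
  - destruct (zeta_q_bound_lt1 q eps sigma Hq Heps Hlt) as [C0 [HC Hb]].
    exists C0, 1. split; [exact HC | split; [lra |]]. intros v Hv Hd.
    split; [| split]; intros; try lra. apply Hb; [exact Hv | apply Haway, Hd].
  - destruct (zeta_q_bound_eq1 q eps Hq Heps) as [C0 [HC Hb]].
    exists C0, 1. split; [exact HC | split; [lra |]]. intros v Hv Hd.
    split; [| split]; intros; try lra. apply Hb; [exact Hv | apply Haway, Hd].
  - destruct (zeta_q_bound_gt1 q eps sigma Hq Heps Hgt) as [C0 [HC Hb]].
    exists C0, 1. split; [exact HC | split; [lra |]]. intros v Hv Hd.
    split; [| split]; intros; try lra. apply Hb; [exact Hv | apply Haway, Hd].
Qed.
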